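(* Let $F$ be a field of characteristic different from $2$, $Q_1,\dots,Q_4$ quaternion $F$-algebras with canonical involutions $\gamma_i$, $(D,\gamma)=(Q_1,\gamma_1)\otimes(Q_2,\gamma_2)$, and $u\in D$ invertible with $\gamma(u)=u$ and $\mathrm{Trd}_D(u)=0$, together with an isomorphism $\phi:(Q_3,\gamma_3)\otimes(Q_4,\gamma_4)\xrightarrow{\sim}(D,\mathrm{Int}(u^{-1})\circ\gamma)$. For a pure quaternion $q\in Q_4^0$, let $W_q=\phi(\{x\otimes q: x\in Q_3^0\})$. Then $\gamma(W_q)$ is a totally isotropic subspace of $D$ for the quadratic form $q_u(x)=\mathrm{Trd}_D(xu\gamma(x))$.
   Context: The canonical involution of a quaternion algebra $Q$ is $\gamma_Q(x)=\mathrm{Trd}_Q(x)-x$; $Q^0=\{x\in Q:\mathrm{Trd}_Q(x)=0\}$ is the space of pure quaternions. $\mathrm{Int}(a)(x)=axa^{-1}$; $\mathrm{Trd}_D$ is the reduced trace of $D$. *)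

From HB Require Import structures.
From mathcomp Require Import all_boot all_order all_algebra.
Set Implicit Arguments. Unset Strict Implicit. Unset Printing Implicit Defensive.
Import GRing.Theory.
Local Open Scope ring_scope.

(* Quaternion algebra (a,b)_F (char F <> 2, a,b <> 0), with F-basis
   e0 = 1, e1 = i, e2 = j, e3 = k = ij, where i^2 = a, j^2 = b, ij = -ji.
   An element is its coordinate row vector in 'rV[F]_4.
   e_m * e_n = qcoef a b m n * e_(qxor m n). *)

Definition qxor (m n : nat) : nat :=
  match m, n with
  | 0, x => x | x, 0 => x
  | 1, 1 => 0 | 1, 2 => 3 | 1, 3 => 2
  | 2, 1 => 3 | 2, 2 => 0 | 2, 3 => 1
  | 3, 1 => 2 | 3, 2 => 1 | 3, 3 => 0
  | _, _ => 0
  end.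

Section Quat.
Variable F : fieldType.

Definition qcoef (a b : F) (m n : nat) : F :=
  match m, n with
  | 0, _ => 1 | _, 0 => 1
  | 1, 1 => a | 2, 2 => b | 3, 3 => - (a * b)
  | 1, 2 => 1 | 2, 1 => -1
  | 1, 3 => a | 3, 1 => - a
  | 2, 3 => - b | 3, 2 => b
  | _, _ => 0
  end.

Definition qsc (a b : F) (m n k : 'I_4) : F :=
  if qxor m n == k then qcoef a b m n else 0.

Definition qsgn (m : 'I_4) : F := if val m == 0%N then 1 else -1.

Definition qgam (x : 'rV[F]_4) : 'rV[F]_4 := \row_m (qsgn m * x ord0 m).
Definition qtrd (x : 'rV[F]_4) : F := (x + qgam x) ord0 ord0.

(* Tensor product (a1,b1)_F (x) (a2,b2)_F : element X : 'M[F]_4 has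
   coordinate X m n on the basis vector e_m (x) e_n. *)
Definition tmul (a1 b1 a2 b2 : F) (X Y : 'M[F]_4) : 'M[F]_4 :=
  \matrix_(k, l) \sum_(m < 4) \sum_(n < 4) \sum_(m' < 4) \sum_(n' < 4)
     (qsc a1 b1 m m' k * qsc a2 b2 n n' l * X m n * Y m' n').

Definition tone : 'M[F]_4 := delta_mx ord0 ord0.

Definition tens (x y : 'rV[F]_4) : 'M[F]_4 := \matrix_(m, n) (x ord0 m * y ord0 n).

Definition tgam (X : 'M[F]_4) : 'M[F]_4 := \matrix_(m, n) (qsgn m * qsgn n * X m n).

(* reduced trace of the tensor product: Trd(x (x) y) = Trd_Q1(x) Trd_Q2(y),
   extended linearly; Trd_Q(e_m) = 2 if m = 0, 0 otherwise. *)
Definition qtrd_basis (m : 'I_4) : F := if val m == 0%N then 2 else 0.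
Definition ttrd (X : 'M[F]_4) : F :=
  \sum_(m < 4) \sum_(n < 4) qtrd_basis m * qtrd_basis n * X m n.

End Quat.

From HB Require Import structures.
From mathcomp Require Import all_boot all_order all_algebra ring.
Import GRing.Theory.
Local Open Scope ring_scope.
Set Implicit Arguments. Unset Strict Implicit.

(* The tensor x (x) q of two pure quaternions is fixed by gamma_3 (x) gamma_4
   and squares to a scalar s, since pure quaternions square to scalars.  Hence
   Y := phi (x (x) q) satisfies Y^2 = s and, because phi intertwines the
   involutions, Y = u^-1 w u with w := gamma (Y).  Then w^2 = u Y^2 u^-1 = s, so
   q_u (w) = Trd (w u gamma (w)) = Trd (w u Y) = Trd (w^2 u) = s Trd (u) = 0. *)

Section StructureConstants.
Variables (R : comNzRingType) (I : finType) (c : I -> I -> I -> R).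

Definition scmul (X Y : I -> R) (k : I) : R := \sum_i \sum_j c i j k * X i * Y j.

Lemma eq_scmul X X' Y Y' : X =1 X' -> Y =1 Y' -> scmul X Y =1 scmul X' Y'.
Proof. by move=> eX eY k; apply: eq_bigr => i _; apply: eq_bigr => j _; rewrite eX eY. Qed.

Hypothesis scA : forall i j k l,
  \sum_p c i j p * c p k l = \sum_p c j k p * c i p l.

Lemma scmulA X Y Z : scmul (scmul X Y) Z =1 scmul X (scmul Y Z).
Proof.
move=> l; rewrite /scmul.
transitivity (\sum_i \sum_j \sum_k \sum_p X i * Y j * Z k * (c i j p * c p k l)).
  under eq_bigr do under eq_bigr do rewrite big_distrr big_distrl /=.
  under eq_bigr do under eq_bigr do under eq_bigr do rewrite big_distrr big_distrl /=.
  under eq_bigr do rewrite exchange_big /=.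
  under eq_bigr do under eq_bigr do rewrite exchange_big /=.
  rewrite exchange_big /=; apply: eq_bigr => i _.
  rewrite exchange_big /=; apply: eq_bigr => j _.
  rewrite exchange_big /=; apply: eq_bigr => k _.
  by apply: eq_bigr => p _; ring.
under eq_bigr do under eq_bigr do under eq_bigr do rewrite -big_distrr scA big_distrr /=.
apply: eq_bigr => i _.
under [RHS]eq_bigr do rewrite big_distrr /=.
under [RHS]eq_bigr do under eq_bigr do rewrite big_distrr /=.
rewrite [RHS]exchange_big /=; apply: eq_bigr => j _.
rewrite [RHS]exchange_big /=; apply: eq_bigr => k _.
by apply: eq_bigr => p _; ring.
Qed.

Variable e : I.
Hypothesis sc1l : forall j k, c e j k = (j == k)%:R.
Hypothesis sc1r : forall j k, c j e k = (j == k)%:R.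

Lemma scmul1l s Y : scmul (fun i => s * (i == e)%:R) Y =1 (fun k => s * Y k).
Proof.
move=> k; rewrite /scmul (bigD1 e) //= [X in _ + X]big1 => [|i /negPf ne]; last first.
  by apply: big1 => j _; rewrite ne !mulr0 mul0r.
rewrite addr0 (bigD1 k) //= [X in _ + X]big1 => [|j /negPf ne]; last by rewrite sc1l ne !mul0r.
by rewrite sc1l !eqxx addr0 mulr1 mul1r mulrC.
Qed.

Lemma scmul1r s X : scmul X (fun i => s * (i == e)%:R) =1 (fun k => s * X k).
Proof.
move=> k; rewrite /scmul (bigD1 k) //= [X in _ + X]big1 => [|i /negPf ne]; last first.
  rewrite (bigD1 e) //= [X in _ + X]big1 => [|j /negPf nje]; last by rewrite nje !mulr0.
  by rewrite sc1r ne !mul0r addr0.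
rewrite addr0 (bigD1 e) //= [X in _ + X]big1 => [|j /negPf ne]; last by rewrite ne !mulr0.
by rewrite sc1r !eqxx addr0 mulr1 mul1r mulrC.
Qed.

End StructureConstants.

Section Quaternion.
Variables (F : fieldType) (a b : F).

Lemma qscA (i j k l : 'I_4) :
  \sum_p qsc a b i j p * qsc a b p k l = \sum_p qsc a b j k p * qsc a b i p l.
Proof.
rewrite !big_ord_recl !big_ord0 /qsc.
case: i => [[|[|[|[|i]]]] ?] //; case: j => [[|[|[|[|j]]]] ?] //;
case: k => [[|[|[|[|k]]]] ?] //; case: l => [[|[|[|[|l]]]] ?] //=; ring.
Qed.

Lemma qsc1l (j k : 'I_4) : qsc a b ord0 j k = (j == k)%:R.
Proof. by rewrite /qsc; case: j => [[|[|[|[|j]]]] ?] //=; case: k => [[|[|[|[|k]]]] ?]. Qed.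

Lemma qsc1r (j k : 'I_4) : qsc a b j ord0 k = (j == k)%:R.
Proof. by rewrite /qsc; case: j => [[|[|[|[|j]]]] ?] //=; case: k => [[|[|[|[|k]]]] ?]. Qed.

Definition qmul (x y : 'rV[F]_4) : 'rV[F]_4 :=
  \row_k \sum_m \sum_n qsc a b m n k * x ord0 m * y ord0 n.

Lemma qmul_pure_sqr (x : 'rV[F]_4) : x ord0 ord0 = 0 ->
  qmul x x = qmul x x ord0 ord0 *: delta_mx ord0 ord0.
Proof.
move=> x0; apply/matrixP => i k; rewrite (ord1 i) !mxE.
case: (eqVneq k ord0) => [-> | nk0]; first by rewrite mulr1.
rewrite mulr0; move: nk0; rewrite !big_ord_recl !big_ord0 /qsc.
by case: k => [[|[|[|[|k]]]] ?] //= _; rewrite x0; ring.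
Qed.

Lemma qtrd_pure (x : 'rV[F]_4) : (2%:R : F) != 0 -> qtrd x = 0 -> x ord0 ord0 = 0.
Proof.
move=> h2; rewrite /qtrd !mxE /qsgn /= mul1r -mulr2n -mulr_natr => /eqP.
by rewrite mulf_eq0 (negPf h2) orbF => /eqP.
Qed.

Lemma qgam_pure (x : 'rV[F]_4) : x ord0 ord0 = 0 -> qgam x = - x.
Proof.
move=> x0; apply/matrixP => i m; rewrite (ord1 i) !mxE /qsgn.
case: (eqVneq m ord0) => [-> | nm0]; first by rewrite x0 mulr0 oppr0.
by rewrite ifN ?mulN1r // -[0%N]/(val (@ord0 3)) val_eqE.
Qed.

End Quaternion.

Section Tensor.
Variables (F : fieldType) (a1 b1 a2 b2 : F).
Local Notation tmul := (tmul a1 b1 a2 b2).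

Lemma sum_pair (G : 'I_4 * 'I_4 -> F) : \sum_p G p = \sum_m \sum_n G (m, n).
Proof. by rewrite pair_bigA; apply: eq_bigr => -[]. Qed.

Definition tsc (p r s : 'I_4 * 'I_4) : F :=
  qsc a1 b1 p.1 r.1 s.1 * qsc a2 b2 p.2 r.2 s.2.

Definition flat (X : 'M[F]_4) (p : 'I_4 * 'I_4) : F := X p.1 p.2.

Lemma tscA i j k l :
  \sum_p tsc i j p * tsc p k l = \sum_p tsc j k p * tsc i p l.
Proof.
rewrite /tsc !sum_pair /=.
under eq_bigr do under eq_bigr do rewrite mulrACA.
under [RHS]eq_bigr do under eq_bigr do rewrite mulrACA.
by rewrite -!big_distrlr /= !qscA.
Qed.

Lemma tmulE X Y k l : tmul X Y k l = scmul tsc (flat X) (flat Y) (k, l).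
Proof.
rewrite mxE /scmul sum_pair; apply: eq_bigr => m _; apply: eq_bigr => n _.
rewrite sum_pair; apply: eq_bigr => m' _; apply: eq_bigr => n' _.
by rewrite /tsc /flat /=; ring.
Qed.

Lemma flat_tmul X Y : flat (tmul X Y) =1 scmul tsc (flat X) (flat Y).
Proof. by case=> k l; rewrite /flat tmulE. Qed.

Lemma tmulA X Y Z : tmul (tmul X Y) Z = tmul X (tmul Y Z).
Proof.
apply/matrixP => k l; rewrite !tmulE (eq_scmul _ (flat_tmul X Y) (frefl _)).
by rewrite scmulA; [apply: eq_scmul => // p; rewrite flat_tmul | exact: tscA].
Qed.

Lemma flat_scale_tone s : flat (s *: tone F) =1 (fun p => s * (p == (ord0, ord0))%:R).
Proof. by case=> m n; rewrite /flat !mxE. Qed.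

Lemma tsc1l j k : tsc (ord0, ord0) j k = (j == k)%:R.
Proof.
case: j k => [j1 j2] [k1 k2]; rewrite /tsc /= !qsc1l xpair_eqE.
by case: (j1 == k1); rewrite /= ?mul1r ?mul0r.
Qed.

Lemma tsc1r j k : tsc j (ord0, ord0) k = (j == k)%:R.
Proof.
case: j k => [j1 j2] [k1 k2]; rewrite /tsc /= !qsc1r xpair_eqE.
by case: (j1 == k1); rewrite /= ?mul1r ?mul0r.
Qed.

Lemma tmul_scale_tonel s X : tmul (s *: tone F) X = s *: X.
Proof.
apply/matrixP => k l.
by rewrite tmulE (eq_scmul _ (flat_scale_tone s) (frefl _)) (scmul1l tsc1l) mxE.
Qed.

Lemma tmul_scale_toner s X : tmul X (s *: tone F) = s *: X.
Proof.
apply/matrixP => k l.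
by rewrite tmulE (eq_scmul _ (frefl _) (flat_scale_tone s)) (scmul1r tsc1r) mxE.
Qed.

Lemma tmul1l X : tmul (tone F) X = X.
Proof. by rewrite -[tone F]scale1r tmul_scale_tonel scale1r. Qed.

Lemma tmul1r X : tmul X (tone F) = X.
Proof. by rewrite -[tone F]scale1r tmul_scale_toner scale1r. Qed.

Lemma tmul_conj_sqr_scalar s u v w :
  tmul u v = tone F ->
  tmul (tmul (tmul v w) u) (tmul (tmul v w) u) = s *: tone F ->
  tmul (tmul w u) (tmul (tmul v w) u) = s *: u.
Proof.
move=> huv; rewrite !tmulA -[tmul u (tmul v _)]tmulA huv tmul1l.
by move=> /(congr1 (tmul u)); rewrite -tmulA huv tmul1l tmul_scale_toner.
Qed.

Lemma tmul_tens x y x' y' :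
  tmul (tens x y) (tens x' y') = tens (qmul a1 b1 x x') (qmul a2 b2 y y').
Proof.
apply/matrixP => k l; rewrite !mxE big_distrl /=; apply: eq_bigr => m _.
rewrite big_distrl /= exchange_big; apply: eq_bigr => m' _.
rewrite big_distrr /=; apply: eq_bigr => n _; rewrite big_distrr /=.
by apply: eq_bigr => n' _; rewrite !mxE; ring.
Qed.

End Tensor.

Section Involution.
Variable F : fieldType.

Lemma tgamK : involutive (@tgam F).
Proof.
have sgn_sqr (m : 'I_4) : qsgn F m * qsgn F m = 1.
  by rewrite /qsgn; case: ifP; rewrite ?mulr1 ?mulrNN ?mulr1.
move=> X; apply/matrixP => m n; rewrite !mxE.
by rewrite mulrA mulrACA !sgn_sqr mulr1 mul1r.
Qed.

Lemma tgam_tens (x y : 'rV[F]_4) : tgam (tens x y) = tens (qgam x) (qgam y).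
Proof. by apply/matrixP => m n; rewrite !mxE; ring. Qed.

Lemma tensNN (x y : 'rV[F]_4) : tens (- x) (- y) = tens x y.
Proof. by apply/matrixP => m n; rewrite !mxE mulrNN. Qed.

Lemma tens_scale_unit (s t : F) :
  tens (s *: delta_mx ord0 ord0) (t *: delta_mx ord0 ord0) = (s * t) *: tone F.
Proof.
apply/matrixP => m n; rewrite !mxE.
by case: (m == ord0); case: (n == ord0); rewrite /= ?mulr0 ?mul0r ?mulr1.
Qed.

Lemma ttrdZ (s : F) X : ttrd (s *: X) = s * ttrd X.
Proof.
rewrite /ttrd mulr_sumr; apply: eq_bigr => m _; rewrite mulr_sumr.
by apply: eq_bigr => n _; rewrite mxE; ring.
Qed.

End Involution.

Lemma linear_scale (R : nzRingType) (V W : lmodType R) (f : V -> W) :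
  (forall c x y, f (c *: x + y) = c *: f x + f y) -> forall c x, f (c *: x) = c *: f x.
Proof.
move=> f_lin c x.
have f0 : f 0 = 0.
  by have := f_lin 1 0 0; rewrite !scale1r !addr0 -{1}[f 0]add0r => /addIr <-.
by rewrite -[c *: x]addr0 f_lin f0 addr0.
Qed.

Theorem claim4p5 (F : fieldType) (h2 : (2%:R : F) != 0)
  (a1 b1 a2 b2 a3 b3 a4 b4 : F)
  (ha1 : a1 != 0) (hb1 : b1 != 0) (ha2 : a2 != 0) (hb2 : b2 != 0)
  (ha3 : a3 != 0) (hb3 : b3 != 0) (ha4 : a4 != 0) (hb4 : b4 != 0)
  (u v : 'M[F]_4)
  (huv : tmul a1 b1 a2 b2 u v = tone F) (hvu : tmul a1 b1 a2 b2 v u = tone F)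
  (hgu : tgam u = u) (htu : ttrd u = 0)
  (phi : 'M[F]_4 -> 'M[F]_4)
  (phi_lin : forall (c : F) (X Y : 'M[F]_4), phi (c *: X + Y) = c *: phi X + phi Y)
  (phi_mul : forall X Y : 'M[F]_4,
      phi (tmul a3 b3 a4 b4 X Y) = tmul a1 b1 a2 b2 (phi X) (phi Y))
  (phi_one : phi (tone F) = tone F)
  (phi_bij : bijective phi)
  (phi_inv : forall X : 'M[F]_4,
      phi (tgam X) = tmul a1 b1 a2 b2 (tmul a1 b1 a2 b2 v (tgam (phi X))) u)
  (q : 'rV[F]_4) (hq : qtrd q = 0) :
  forall x : 'rV[F]_4, qtrd x = 0 ->
    let w := tgam (phi (tens x q)) in
    ttrd (tmul a1 b1 a2 b2 (tmul a1 b1 a2 b2 w u) (tgam w)) = 0.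
Proof.
move=> x hx w.
have x0 := qtrd_pure h2 hx; have q0 := qtrd_pure h2 hq.
have tgam_xq : tgam (tens x q) = tens x q by rewrite tgam_tens !qgam_pure // tensNN.
have [s sqr_xq] : exists s, tmul a3 b3 a4 b4 (tens x q) (tens x q) = s *: tone F.
  by eexists; rewrite tmul_tens (qmul_pure_sqr _ _ x0) (qmul_pure_sqr _ _ q0) tens_scale_unit.
have phi_xq : phi (tens x q) = tmul a1 b1 a2 b2 (tmul a1 b1 a2 b2 v w) u.
  by rewrite -{1}tgam_xq phi_inv.
rewrite /w tgamK -/w phi_xq (tmul_conj_sqr_scalar (s := s) huv) ?ttrdZ ?htu ?mulr0 //.
by rewrite -phi_xq -phi_mul sqr_xq (linear_scale phi_lin) phi_one.
Qed.
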